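(* Let $n\ge1$, $f\in OSym_{n-1}$, $m\ge0$ and $1\le k\le n$. Then in the $ONH_n$-supermodule $OPol_n$, $$\tau_{k-1}\cdots\tau_1x_1^{m+k-1}\cdot\sigma_1(f)=\sum_{i=0}^{k-1}\sigma_i\big(h^{(k-i)}_{m+i}\big)\,\tau_i\cdots\tau_1\cdot\sigma_1(f),$$ where for $i=0$ the product $\tau_i\cdots\tau_1$ is interpreted as $1$.
   Context: $\Bbbk$ is a field of characteristic $\neq2$. $OPol_N$: graded superalgebra generated by odd degree-2 $x_1,\dots,x_N$ with $x_jx_i=-x_ix_j$ ($i\neq j$); $OPol_M\subseteq OPol_N$ for $M\le N$. $OSym_N\subseteq OPol_N$ is the subalgebra generated by $e^{(N)}_r:=\sum_{1\le i_1<\cdots<i_r\le N}x_{i_1}\cdots x_{i_r}$. $h^{(N)}_r:=\sum_{N\ge i_r\ge\cdots\ge i_1\ge1}x_{i_r}\cdots x_{i_1}$. $\sigma_i:OPol_{N}\to OPol_{N+i}$ is $x_j\mapsto x_{j+i}$. The odd nil-Hecke algebra $ONH_n$ is the graded superalgebra generated by odd elements $x_1,\dots,x_n$ (degree 2) and $\tau_1,\dots,\tau_{n-1}$ (degree $-2$) subject to: $x_ix_j=-x_jx_i$ ($i\ne j$); $\tau_i\tau_j=-\tau_j\tau_i$ ($|i-j|>1$); $x_i\tau_j=-\tau_jx_i$ ($i\ne j,j+1$); $\tau_j^2=0$; $\tau_j\tau_{j+1}\tau_j=-\tau_{j+1}\tau_j\tau_{j+1}$; $x_i\tau_i-\tau_ix_{i+1}=1=\tau_ix_i-x_{i+1}\tau_i$.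 It acts on $OPol_n$ with $x_i$ acting by left multiplication and $\tau_j$ acting by the odd Demazure operator $\partial_j$: the unique odd linear map with $\partial_j(x_i)=\delta_{i,j}-\delta_{i,j+1}$ and $\partial_j(fg)=\partial_j(f)g+({}^{s_j}f)\partial_j(g)$, where ${}^{s_j}$ is the superalgebra automorphism with $x_j\mapsto x_{j+1}$, $x_{j+1}\mapsto x_j$, $x_i\mapsto -x_i$ otherwise. *)

From HB Require Import structures.
From mathcomp Require Import all_boot all_order all_algebra.
From mathcomp Require Import mpoly.
Set Implicit Arguments. Unset Strict Implicit. Unset Printing Implicit Defensive.
Import Order.TTheory GRing.Theory Num.Theory.
Local Open Scope ring_scope.

(* OPol_n is modelled on the k-vector space {mpoly R[n]}: the monomial
   'X_[a] stands for the ordered product x_1^{a_1} x_2^{a_2} ... x_n^{a_n}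
   (variables are 0-based: paper's x_{j+1} is index j). *)

Section OPol.
Variables (R : fieldType) (n : nat).
Notation OP := {mpoly R[n]}.

(* sign exponent for x^a * x^b = (-1)^(osgn a b) x^(a+b):
   moving x_j^{b_j} left past x_i^{a_i} with j < i *)
Definition osgn (a b : 'X_{1..n}) : nat :=
  \sum_(i < n) \sum_(j < n | (j < i)%N) (a i * b j)%N.

Definition omul (p q : OP) : OP :=
  \sum_(a <- msupp p) \sum_(b <- msupp q)
     (((-1) ^+ osgn a b * p@_a * q@_b) *: 'X_[a + b]).

Definition opow (p : OP) (r : nat) : OP := iter r (omul p) 1.

(* the generator x_{j+1} (0-based index j); 0 if out of range *)
Definition ox (j : nat) : OP := if insub j is Some i then 'X_i else 0.

(* algebra map determined by images g l of the generators x_l,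
   applied to basis monomials written as ordered products *)
Definition oalgmap (g : nat -> OP) (p : OP) : OP :=
  \sum_(a <- msupp p) (p@_a *: \big[omul/1]_(l < n) opow (g l) (a l)).

Definition oshift (i : nat) (p : OP) : OP := oalgmap (fun l => ox (l + i)) p.

(* the superalgebra automorphism s_j (0-based j, paper's s_{j+1}):
   x_j <-> x_{j+1}, x_l |-> - x_l otherwise *)
Definition osref (j : nat) (p : OP) : OP :=
  oalgmap (fun l => if l == j then ox j.+1
                    else if l == j.+1 then ox j else - ox l) p.

Definition oe (N r : nat) : OP :=
  \sum_(t : r.-tuple 'I_n | sorted ltn (map val t) && all (fun i => i < N)%N (map val t))
     \big[omul/1]_(i <- t) 'X_i.

Definition oh (N r : nat) : OP :=
  \sum_(t : r.-tuple 'I_n | sorted leq (map val t) && all (fun i => i < N)%N (map val t))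
     \big[omul/1]_(i <- rev t) 'X_i.

(* OSym_N (viewed inside OPol_n): the subalgebra generated by the e^{(N)}_r *)
Inductive in_OSym (N : nat) : OP -> Prop :=
  | OSym_one : in_OSym N 1
  | OSym_e r : in_OSym N (oe N r)
  | OSym_add p q : in_OSym N p -> in_OSym N q -> in_OSym N (p + q)
  | OSym_scale (c : R) p : in_OSym N p -> in_OSym N (c *: p)
  | OSym_mul p q : in_OSym N p -> in_OSym N q -> in_OSym N (omul p q).

(* d j is the odd Demazure operator partial_{j+1} (0-based j, j + 1 < n):
   the odd linear map with partial(x_i) = delta_{i,j} - delta_{i,j+1} and
   partial(f g) = partial(f) g + (s_j f) partial(g). *)
Definition is_odd_demazure (d : nat -> OP -> OP) : Prop :=
  forall j, (j.+1 < n)%N ->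
    [/\ forall (c : R) (p q : OP), d j (c *: p + q) = c *: d j p + d j q,
        forall i, (i < n)%N -> d j (ox i) = (i == j)%:R - (i == j.+1)%:R
      & forall p q : OP, d j (omul p q) = omul (d j p) q + omul (osref j p) (d j q)].

Fixpoint otaus (d : nat -> OP -> OP) (i : nat) (p : OP) : OP :=
  if i is i'.+1 then d i' (otaus d i' p) else p.

End OPol.

From HB Require Import structures.
From mathcomp Require Import all_boot all_order all_algebra.
From mathcomp Require Import mpoly ssrcomplements.
From mathcomp Require Import zify ring.
Set Implicit Arguments. Unset Strict Implicit. Unset Printing Implicit Defensive.
Import Order.TTheory GRing.Theory Num.Theory.
Local Open Scope ring_scope.

(** Apply tau_k = d_k to the identity for k (with m + 1 in
   place of m) and expand each summand
   sigma_i(h^(k-i)_(m+1+i)) * tau_i...tau_1 sigma_1(f) by the twisted Leibniz rule.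
   - d_k sigma_i(h^(k-i)_(r+1)) = sigma_i(h^(k-i+1)_r): peel off the factor x_k
     in h^(N)_(r+1) = x_N h^(N)_r + h^(N-1)_(r+1); the remaining variables are
     untouched by d_k.
   - d_k kills tau_i...tau_1 sigma_1(f) for i < k - 1: d_k anticommutes with
     d_1, ..., d_(k-2), and sigma_1(f) is killed by d_2, ..., d_(n-1) because the
     two terms x_j e' and x_(j+1) e'' of an elementary symmetric polynomial that
     d_j sees cancel each other.
   - For i = k - 1, s_k turns x_k^(m+k) into x_(k+1)^(m+k) = sigma_k(h^(1)_(m+k)),
     which is the new last summand. *)

Lemma addr_cancel_pairs (V : zmodType) (P Q X Y : V) :
  - P + (Q + X) + (- Q + (P + Y)) = X + Y.
Proof. by rewrite addrACA addrCA !addrA (addrAC _ (- Q)) subrK [Q + X]addrC addrK. Qed.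

Section LinearMaps.
Variables (R : pzRingType) (V : lmodType R) (D : V -> V).
Hypothesis D_linear : linear D.

Let LD : {linear V -> V} := HB.pack D (GRing.isLinear.Build R V V *:%R D D_linear).

Lemma lin0 : D 0 = 0. Proof. exact: (linear0 LD). Qed.
Lemma linD u v : D (u + v) = D u + D v. Proof. exact: (linearD LD). Qed.
Lemma linZ c u : D (c *: u) = c *: D u. Proof. exact: (linearZ_LR LD). Qed.
Lemma linN u : D (- u) = - D u. Proof. exact: (linearN LD). Qed.
Lemma lin_sum I (r : seq I) (P : pred I) (F : I -> V) :
  D (\sum_(i <- r | P i) F i) = \sum_(i <- r | P i) D (F i).
Proof. exact: (linear_sum LD). Qed.

End LinearMaps.

Section MonomialExtension.
Variables (R : comNzRingType) (n : nat).
Implicit Types (p : {mpoly R[n]}) (G : 'X_{1..n} -> {mpoly R[n]}).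

Definition mextend G p : {mpoly R[n]} := \sum_(a <- msupp p) p@_a *: G a.

Lemma mextendEw G p k : (msize p <= k)%N ->
  mextend G p = \sum_(a : 'X_{1..n < k}) p@_a *: G a.
Proof.
move=> le_pk; rewrite /mextend (big_mksub 'X_{1..n < k}) ?msupp_uniq //=; last first.
  by move=> a /msize_mdeg_lt /leq_trans; apply.
by rewrite big_rmcond //= => a /memN_msupp_eq0 ->; rewrite scale0r.
Qed.

Lemma mextend_linear G : linear (mextend G).
Proof.
move=> c p q; pose k := (msize p + msize q + msize (c *: p + q))%N.
rewrite !(mextendEw G (k := k)) ?/k; try lia.
rewrite scaler_sumr -big_split /=; apply: eq_bigr => a _.
by rewrite mcoeffD mcoeffZ scalerDl scalerA.
Qed.

Lemma mextendX G a : mextend G 'X_[a] = G a.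
Proof. by rewrite /mextend msuppX big_seq1 mcoeffX eqxx scale1r. Qed.

Lemma mextend_scaleD (c : R) G G1 G2 p : (forall a, G a = c *: G1 a + G2 a) ->
  mextend G p = c *: mextend G1 p + mextend G2 p.
Proof.
move=> eqG; rewrite /mextend scaler_sumr -big_split /=; apply: eq_bigr => a _.
by rewrite eqG scalerDr !scalerA mulrC.
Qed.

Lemma linear_mpoly_ext (D1 D2 : {mpoly R[n]} -> {mpoly R[n]}) :
  linear D1 -> linear D2 -> (forall a, D1 'X_[a] = D2 'X_[a]) -> D1 =1 D2.
Proof.
move=> lin1 lin2 eqX p; rewrite [p]mpolyE !lin_sum //.
by apply: eq_bigr => a _; rewrite !linZ // eqX.
Qed.

End MonomialExtension.

Section SkewProduct.
Variables (R : fieldType) (n : nat).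
Notation OP := {mpoly R[n]}.
Implicit Types (p q r : OP) (a b e : 'X_{1..n}).

Lemma osgnDl a b e : osgn (a + b) e = (osgn a e + osgn b e)%N.
Proof.
rewrite /osgn -big_split; apply: eq_bigr => i _; rewrite -big_split.
by apply: eq_bigr => j _; rewrite mnmDE mulnDl.
Qed.

Lemma osgnDr a b e : osgn a (b + e) = (osgn a b + osgn a e)%N.
Proof.
rewrite /osgn -big_split; apply: eq_bigr => i _; rewrite -big_split.
by apply: eq_bigr => j _; rewrite mnmDE mulnDr.
Qed.

Lemma osgn0l b : osgn 0 b = 0%N.
Proof. by rewrite /osgn big1 // => i _; rewrite big1 // => j _; rewrite mnm0E. Qed.

Lemma osgn0r a : osgn a 0 = 0%N.
Proof. by rewrite /osgn big1 // => i _; rewrite big1 // => j _; rewrite mnm0E muln0. Qed.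

Lemma omulE p q : omul p q =
  mextend (fun a => mextend (fun b => (-1) ^+ osgn a b *: 'X_[a + b]) q) p.
Proof.
rewrite /omul /mextend; apply: eq_bigr => a _; rewrite scaler_sumr.
by apply: eq_bigr => b _; rewrite !scalerA; congr (_ *: _); ring.
Qed.

Lemma omul_linearl q : linear (fun p : OP => omul p q).
Proof. by move=> c p1 p2; rewrite !omulE mextend_linear. Qed.

Lemma omul_linearr p : linear (omul p).
Proof. by move=> c q1 q2; rewrite !omulE; apply: mextend_scaleD => a; apply: mextend_linear. Qed.

Lemma omulXX a b : omul 'X_[a] 'X_[b] = (-1) ^+ osgn a b *: 'X_[a + b] :> OP.
Proof. by rewrite omulE !mextendX. Qed.

Lemma omul1l p : omul 1 p = p.
Proof.
rewrite -mpolyX0; apply: (linear_mpoly_ext (omul_linearr _) (D2 := id)) => // b.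
by rewrite omulXX osgn0l expr0 scale1r add0m.
Qed.

Lemma omul1r p : omul p 1 = p.
Proof.
rewrite -mpolyX0; apply: (linear_mpoly_ext (omul_linearl _) (D2 := id)) => // a.
by rewrite omulXX osgn0r expr0 scale1r addm0.
Qed.

Lemma omulA : associative (@omul R n).
Proof.
move=> p q r; apply: (linear_mpoly_ext (D1 := fun p => omul p (omul q r))
   (D2 := fun p => omul (omul p q) r)) => [c x y|c x y|a] /=.
- by rewrite omul_linearl.
- by rewrite !omul_linearl.
apply: (linear_mpoly_ext (D1 := fun q => omul 'X_[a] (omul q r))
   (D2 := fun q => omul (omul 'X_[a] q) r)) => [c x y|c x y|b] /=.
- by rewrite omul_linearl omul_linearr.
- by rewrite omul_linearr omul_linearl.
apply: (linear_mpoly_ext (D1 := fun r => omul 'X_[a] (omul 'X_[b] r))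
   (D2 := fun r => omul (omul 'X_[a] 'X_[b]) r)) => [c x y|c x y|e] /=.
- by rewrite !omul_linearr.
- by rewrite omul_linearr.
rewrite !omulXX (linZ (omul_linearr _)) (linZ (omul_linearl _)) !omulXX.
rewrite !scalerA -!exprD addmA; congr (_ ^+ _ *: _).
by rewrite osgnDr osgnDl; lia.
Qed.

HB.instance Definition _ := Monoid.isLaw.Build OP 1 (@omul R n) omulA omul1l omul1r.

Lemma omul0l p : omul 0 p = 0. Proof. exact: lin0 (omul_linearl p). Qed.
Lemma omul0r p : omul p 0 = 0. Proof. exact: lin0 (omul_linearr p). Qed.
Lemma omulZl (c : R) p q : omul (c *: p) q = c *: omul p q.
Proof. by rewrite (linZ (omul_linearl q)). Qed.
Lemma omulZr (c : R) p q : omul p (c *: q) = c *: omul p q.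
Proof. by rewrite (linZ (omul_linearr p)). Qed.
Lemma omulNl p q : omul (- p) q = - omul p q.
Proof. by rewrite (linN (omul_linearl q)). Qed.
Lemma omulNr p q : omul p (- q) = - omul p q.
Proof. by rewrite (linN (omul_linearr p)). Qed.
Lemma omulDr p q1 q2 : omul p (q1 + q2) = omul p q1 + omul p q2.
Proof. by rewrite (linD (omul_linearr p)). Qed.
Lemma omul_sumr p (I : Type) (s : seq I) (P : pred I) (F : I -> OP) :
  omul p (\sum_(i <- s | P i) F i) = \sum_(i <- s | P i) omul p (F i).
Proof. by rewrite (lin_sum (omul_linearr p)). Qed.

Lemma opow0 p : opow p 0 = 1. Proof. by []. Qed.
Lemma opowS p k : opow p k.+1 = omul p (opow p k). Proof. by []. Qed.

End SkewProduct.

Section Generators.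
Variables (R : fieldType) (n : nat).
Notation OP := {mpoly R[n]}.
Implicit Types (p q : OP) (a b : 'X_{1..n}).
Local Notation xo := (ox R n).

Lemma oxE (i : 'I_n) : xo i = 'X_i.
Proof. by rewrite /ox valK. Qed.

Lemma ox_out l : (n <= l)%N -> xo l = 0.
Proof. by move=> h; rewrite /ox insubN // -leqNgt. Qed.

Lemma osgnUl (l : 'I_n) b : osgn U_(l) b = (\sum_(j < n | (j < l)%N) b j)%N.
Proof.
rewrite /osgn (bigD1 l) //= [X in (_ + X)%N]big1; last first.
  by move=> i hi; rewrite big1 // => j _; rewrite mnm1E eq_sym (negbTE hi).
by rewrite addn0; apply: eq_bigr => j _; rewrite mnm1E eqxx mul1n.
Qed.

Lemma omulXiX (l : 'I_n) a :
  omul 'X_l 'X_[a] = (-1) ^+ (\sum_(j < n | (j < l)%N) a j) *: 'X_[U_(l) + a] :> OP.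
Proof. by rewrite omulXX osgnUl. Qed.

Lemma osgnUU (u v : 'I_n) : osgn U_(u) U_(v) = (v < u)%N.
Proof.
rewrite osgnUl; case: (ltnP v u) => h.
  rewrite (bigD1 v) //= mnm1E eqxx big1 // => j /andP[_ ne].
  by rewrite mnm1E eq_sym (negbTE ne).
by rewrite big1 // => j hj; rewrite mnm1E; case: eqP => // e; move: hj; rewrite -e ltnNge h.
Qed.

Lemma ox_anticomm u v : u != v -> omul (xo u) (xo v) = - omul (xo v) (xo u).
Proof.
move=> ne; case: (ltnP u n) => hu; last by rewrite (ox_out hu) omul0l omul0r oppr0.
case: (ltnP v n) => hv; last by rewrite (ox_out hv) omul0l omul0r oppr0.
rewrite -[u]/(val (Ordinal hu)) -[v]/(val (Ordinal hv)) !oxE !omulXX !osgnUU.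
rewrite addmC -scaleNr; congr (_ *: _) => /=.
case: (ltngtP u v) => h; rewrite ?expr0 ?expr1 ?opprK //.
by move: ne; rewrite h eqxx.
Qed.

Lemma scale_ox_anticomm (c1 c2 : R) u v : u != v ->
  omul (c1 *: xo u) (c2 *: xo v) = - omul (c2 *: xo v) (c1 *: xo u).
Proof.
by move=> ne; rewrite !omulZl !omulZr ox_anticomm // !scalerN scalerA mulrC scalerA.
Qed.

Lemma mpolyX_omulXi a : a != 0%MM -> exists (l : 'I_n) (c : R) a',
  'X_[a] = c *: omul 'X_l 'X_[a'] /\ mdeg a = (mdeg a').+1.
Proof.
move=> nz_a; case: (pickP (fun l : 'I_n => (0 < a l)%N)) => [l al_gt0|a0]; last first.
  by case/eqP: nz_a; apply/mnmP => i; rewrite mnm0E; have := a0 i; case: (a i).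
have def_a : a = (U_(l) + (a - U_(l)))%MM.
  apply/mnmP => i; rewrite mnmDE mnmBE mnm1E; case: eqP => [<-|]; last by rewrite add0n subn0.
  by rewrite add1n subn1 prednK.
exists l, ((-1) ^+ (\sum_(j < n | (j < l)%N) (a - U_(l))%MM j)), (a - U_(l))%MM; split.
  by rewrite omulXiX scalerA -exprD -signr_odd oddD addbb expr0 scale1r -def_a.
by rewrite {1}def_a mdegD mdeg1.
Qed.

Lemma monomial_ind (P : OP -> Prop) : P 1 -> (forall (c : R) p, P p -> P (c *: p)) ->
  (forall (l : 'I_n) p, P p -> P (omul 'X_l p)) -> forall a, P 'X_[a].
Proof.
move=> P1 PZ PX a; move: {2}(mdeg a) (erefl (mdeg a)) => k; elim: k a => [|k ih] a ea.
  by move: ea => /eqP; rewrite mdeg_eq0 => /eqP ->; rewrite mpolyX0.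
have nz_a : a != 0%MM by rewrite -mdeg_eq0 ea.
have [l [c [a' [-> ea']]]] := mpolyX_omulXi nz_a.
by apply/PZ/PX/ih; move: ea'; rewrite ea => -[].
Qed.

Lemma twisted_derivation_eq0 (D : OP -> OP) (w : 'I_n -> OP) : linear D -> D 1 = 0 ->
  (forall (l : 'I_n) p, D (omul 'X_l p) = omul (w l) (D p)) -> D =1 (fun=> 0).
Proof.
move=> D_lin D1 DX; apply: (linear_mpoly_ext (D2 := fun=> 0)) => // [c x y|].
  by rewrite scaler0 addr0.
apply: (monomial_ind (P := fun p => D p = 0)) => // [c p Dp|l p Dp].
  by rewrite linZ // Dp scaler0.
by rewrite DX Dp omul0r.
Qed.

End Generators.

Section AlgebraMap.
Variables (R : fieldType) (n : nat) (g : nat -> {mpoly R[n]}).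
Notation OP := {mpoly R[n]}.
Implicit Types (p q : OP) (a : 'X_{1..n}).
Local Notation om := (@omul R n).
Hypothesis g_anticomm : forall u v, (u < n)%N -> (v < n)%N -> u != v ->
  omul (g u) (g v) = - omul (g v) (g u).

Lemma oalgmap_linear : linear (oalgmap g).
Proof. exact: mextend_linear. Qed.

Lemma oalgmapX a : oalgmap g 'X_[a] = \big[om/1]_(0 <= u < n) opow (g u) (nth 0%N a u).
Proof.
rewrite [LHS]mextendX big_mkord.
by apply: eq_bigr => u _; rewrite (mnm_nth 0%N).
Qed.

Lemma omul_opow_swap l u k : (l < n)%N -> (u < n)%N -> u != l ->
  omul (g l) (opow (g u) k) = (-1) ^+ k *: omul (opow (g u) k) (g l).
Proof.
move=> hl hu ne; elim: k => [|k ih]; first by rewrite opow0 omul1r omul1l expr0 scale1r.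
rewrite opowS omulA (g_anticomm hl hu); last by rewrite eq_sym.
rewrite omulNl -omulA ih omulZr omulA.
by rewrite exprS mulN1r scaleNr -scalerN.
Qed.

Lemma omul_prod_swap l (A : nat -> nat) k : (l < n)%N -> (k <= l)%N ->
  omul (g l) (\big[om/1]_(0 <= u < k) opow (g u) (A u)) =
  (-1) ^+ (\sum_(0 <= u < k) A u)%N *:
     omul (\big[om/1]_(0 <= u < k) opow (g u) (A u)) (g l).
Proof.
move=> hl; elim: k => [|k ih] hk.
  by rewrite !big_geq // omul1r omul1l expr0 scale1r.
rewrite !big_nat_recr // omulA ih; last exact: ltnW.
rewrite omulZl -omulA omul_opow_swap //; last first.
- by rewrite neq_ltn hk.
- exact: leq_trans hk (ltnW hl).
by rewrite omulZr omulA scalerA -exprD.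
Qed.

Lemma oalgmapXiX (l : 'I_n) a :
  oalgmap g (omul 'X_l 'X_[a]) = omul (g l) (oalgmap g 'X_[a]).
Proof.
have nthU u : (u < n)%N -> nth 0%N (U_(l) + a)%MM u = ((u == l) + nth 0%N a u)%N.
  by move=> hu; rewrite -!(mnm_nth 0%N _ (Ordinal hu)) mnmDE mnm1E eq_sym -val_eqE.
have split_l (F : nat -> OP) : \big[om/1]_(0 <= u < n) F u =
    omul (\big[om/1]_(0 <= u < l) F u) (omul (F l) (\big[om/1]_(l.+1 <= u < n) F u)).
  by rewrite (@big_cat_nat _ _ _ l) ?(ltnW (ltn_ord l)) // (big_ltn (ltn_ord l)).
rewrite omulXiX (linZ oalgmap_linear) !oalgmapX !split_l nthU // eqxx add1n opowS.
have -> : \big[om/1]_(0 <= u < l) opow (g u) (nth 0%N (U_(l) + a)%MM u) =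
          \big[om/1]_(0 <= u < l) opow (g u) (nth 0%N a u).
  by apply: eq_big_nat => u /andP[_ hu]; rewrite nthU ?(ltn_trans hu) // ltn_eqF.
have -> : \big[om/1]_(l.+1 <= u < n) opow (g u) (nth 0%N (U_(l) + a)%MM u) =
          \big[om/1]_(l.+1 <= u < n) opow (g u) (nth 0%N a u).
  by apply: eq_big_nat => u /andP[hu hun]; rewrite nthU // gtn_eqF.
rewrite [RHS]omulA (omul_prod_swap (nth 0%N a) (ltn_ord l) (leqnn l)) omulZl.
have -> : (\sum_(j < n | (j < l)%N) a j)%N = (\sum_(0 <= u < l) nth 0%N a u)%N.
  rewrite (big_nat_widen _ _ _ _ _ (ltnW (ltn_ord l))) big_mkord.
  by apply: eq_bigr => j _; rewrite (mnm_nth 0%N).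
by rewrite -!omulA.
Qed.

Lemma oalgmap_oxM l p : (l < n)%N ->
  oalgmap g (omul (ox R n l) p) = omul (g l) (oalgmap g p).
Proof.
move=> hl; rewrite -[l]/(val (Ordinal hl)) oxE; move: p.
apply: (linear_mpoly_ext (D1 := fun p => oalgmap g (omul 'X_(Ordinal hl) p))
   (D2 := fun p => omul (g l) (oalgmap g p))) => [c x y|c x y|a] /=.
- by rewrite omul_linearr oalgmap_linear.
- by rewrite oalgmap_linear omul_linearr.
exact: oalgmapXiX.
Qed.

Lemma oalgmap1 : oalgmap g 1 = 1.
Proof. by rewrite -{1}mpolyX0 [LHS]mextendX big1 // => l _; rewrite mnm0E. Qed.

Lemma oalgmapM p q : oalgmap g (omul p q) = omul (oalgmap g p) (oalgmap g q).
Proof.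
move: p; apply: (linear_mpoly_ext (D1 := fun p => oalgmap g (omul p q))
   (D2 := fun p => omul (oalgmap g p) (oalgmap g q))) => [c x y|c x y|] /=.
- by rewrite omul_linearl oalgmap_linear.
- by rewrite oalgmap_linear omul_linearl.
apply: (monomial_ind (P := fun p => oalgmap g (omul p q) = omul (oalgmap g p) (oalgmap g q)))
  => [|c p e|l p e].
- by rewrite omul1l oalgmap1 omul1l.
- by rewrite omulZl !(linZ oalgmap_linear) e omulZl.
by rewrite -omulA -oxE !oalgmap_oxM // e omulA.
Qed.

End AlgebraMap.

(* With 0-based indices, s_j x_v = swap_sign j v *: x_(swapi j v) and d_j x_v = dval j v. *)
Definition swapi (j v : nat) : nat := if v == j then j.+1 else if v == j.+1 then j else v.

Definition swap_sign (R : pzRingType) (j v : nat) : R :=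
  if (v == j) || (v == j.+1) then 1 else -1.

Definition dval (R : pzRingType) (j v : nat) : R := (v == j)%:R - (v == j.+1)%:R.

Lemma swapiK j : involutive (swapi j).
Proof.
move=> v; rewrite /swapi; case: (eqVneq v j) => [->|h1]; first by rewrite eqxx gtn_eqF.
case: (eqVneq v j.+1) => [->|h2]; first by rewrite eqxx.
by rewrite (negbTE h1) (negbTE h2).
Qed.

Section FarIndices.
Variables (R : comNzRingType) (i l : nat).
Hypothesis far : (i.+2 <= l)%N || (l.+2 <= i)%N.

Ltac decide_eqs := repeat (match goal with |- context [?x == ?y] =>
   (have ->: (x == y) = true by apply/eqP; lia) ||
   (have ->: (x == y) = false by apply/eqP; lia) end; simpl).
Ltac by_cases u := rewrite /dval /swap_sign /swapi;
  have [?|?|?] := ltngtP u i; have [?|?|?] := ltngtP u i.+1;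
  have [?|?|?] := ltngtP u l; have [?|?|?] := ltngtP u l.+1;
  try (exfalso; lia); decide_eqs; rewrite /= ?orbF ?orbT; try ring; try lia.

Lemma dval_swap_far u : dval R l u + swap_sign R i u * dval R l (swapi i u) = 0.
Proof. by_cases u. Qed.

Lemma swapiC u : swapi i (swapi l u) = swapi l (swapi i u).
Proof. by_cases u. Qed.

Lemma swap_signC u :
  swap_sign R l u * swap_sign R i (swapi l u) = swap_sign R i u * swap_sign R l (swapi i u).
Proof. by_cases u. Qed.

End FarIndices.

Section ShiftAndReflection.
Variables (R : fieldType) (n : nat).
Notation OP := {mpoly R[n]}.
Implicit Types (p q : OP).
Local Notation xo := (ox R n).

Lemma oshift_linear i : linear (@oshift R n i).
Proof. exact: oalgmap_linear. Qed.

Let oshift_anticomm i u v : (u < n)%N -> (v < n)%N -> u != v ->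
  omul (xo (u + i)) (xo (v + i)) = - omul (xo (v + i)) (xo (u + i)).
Proof. by move=> _ _ ne; apply: ox_anticomm; rewrite eqn_add2r. Qed.

Lemma oshift1 i : oshift i (1 : OP) = 1.
Proof. exact: oalgmap1. Qed.

Lemma oshift_oxM i l p : (l < n)%N -> oshift i (omul (xo l) p) = omul (xo (l + i)) (oshift i p).
Proof. exact: (oalgmap_oxM (@oshift_anticomm i)). Qed.

Lemma oshiftM i p q : oshift i (omul p q) = omul (oshift i p) (oshift i q).
Proof. exact: (oalgmapM (@oshift_anticomm i)). Qed.

Lemma osrefE j p : osref j p = oalgmap (fun l => swap_sign R j l *: xo (swapi j l)) p.
Proof.
rewrite /osref /oalgmap; apply: eq_bigr => a _; congr (_ *: _).
apply: eq_bigr => l _; rewrite /swap_sign /swapi.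
by case: eqP => _; [|case: eqP => _]; rewrite /= ?scale1r ?scaleN1r.
Qed.

Let osref_anticomm j u v : (u < n)%N -> (v < n)%N -> u != v ->
  omul (swap_sign R j u *: xo (swapi j u)) (swap_sign R j v *: xo (swapi j v)) =
  - omul (swap_sign R j v *: xo (swapi j v)) (swap_sign R j u *: xo (swapi j u)).
Proof. by move=> _ _ ne; apply: scale_ox_anticomm; rewrite (inj_eq (inv_inj (swapiK j))). Qed.

Lemma osref1 j : osref j (1 : OP) = 1.
Proof. by rewrite osrefE oalgmap1. Qed.

Lemma osref_oxM j l p : (l < n)%N ->
  osref j (omul (xo l) p) = omul (swap_sign R j l *: xo (swapi j l)) (osref j p).
Proof. by move=> hl; rewrite !osrefE (oalgmap_oxM (@osref_anticomm j)). Qed.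

Lemma osref_ox j l : (l < n)%N -> osref j (xo l) = swap_sign R j l *: xo (swapi j l).
Proof. by move=> hl; rewrite -[xo l]omul1r osref_oxM // osref1 omul1r. Qed.

Lemma osref_opow j r : (j.+1 < n)%N -> osref j (opow (xo j) r) = opow (xo j.+1) r.
Proof.
move=> hj; elim: r => [|r ih]; first exact: osref1.
by rewrite !opowS osref_oxM ?ih ?(ltnW hj) // /swap_sign /swapi eqxx /= scale1r.
Qed.

End ShiftAndReflection.

Section SortedProducts.
Variables (R : fieldType) (n : nat).
Notation OP := {mpoly R[n]}.

Definition osorted_sum (e : rel nat) (P : pred nat) (r : nat) : OP :=
  \sum_(t : r.-tuple 'I_n | sorted e (map val t) && all P (map val t))
     \big[@omul R n/1]_(i <- t) 'X_i.

Lemma eq_osorted_sum e P Q r : P =1 Q -> osorted_sum e P r = osorted_sum e Q r.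
Proof. by move=> eqPQ; apply: eq_bigl => t; rewrite (eq_all eqPQ). Qed.

Lemma osorted_sum0 e P : osorted_sum e P 0 = 1.
Proof.
rewrite /osorted_sum (eq_bigl (fun t => t == [tuple])) => [|t]; last by rewrite tuple0 eqxx.
by rewrite big_pred1_eq big_nil.
Qed.

Lemma osorted_sumS e P r : transitive e -> osorted_sum e P r.+1 =
  \sum_(x : 'I_n | P x) omul 'X_x (osorted_sum e (predI P (e x)) r).
Proof.
move=> e_trans; rewrite /osorted_sum.
rewrite (reindex (fun p : 'I_n * r.-tuple 'I_n => [tuple of p.1 :: p.2])) /=; last first.
  exists (fun t : r.+1.-tuple 'I_n => (thead t, [tuple of behead t])) => [[x t]|t] _ /=.
    by rewrite theadE; congr (_, _); apply: val_inj.
  by rewrite -tuple_eta.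
under [RHS]eq_bigr => x _ do rewrite omul_sumr.
rewrite pair_big_dep /=; apply: eq_big => [[x t]|[x t] _] /=; last by rewrite big_cons.
rewrite (path_sortedE e_trans) all_predI.
by case: (P x); case: (all (e x) _); rewrite ?andbT ?andbF.
Qed.

Lemma oh_sorted_sum N r : oh R n N r = osorted_sum geq (fun u => u < N)%N r.
Proof.
rewrite /oh /osorted_sum (reindex_inj (h := fun t : r.-tuple 'I_n => [tuple of rev t])) /=.
  by apply: eq_big => t; rewrite ?map_rev ?rev_sorted ?all_rev ?revK.
by move=> t u /(congr1 val) /= /(can_inj revK) /val_inj.
Qed.

End SortedProducts.

Section Demazure.
Variables (R : fieldType) (n : nat) (d : nat -> {mpoly R[n]} -> {mpoly R[n]}).
Notation OP := {mpoly R[n]}.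
Local Notation xo := (ox R n).
Hypothesis d_demazure : is_odd_demazure d.
Implicit Types (p q : OP).

Lemma demazure_linear j : (j.+1 < n)%N -> linear (d j).
Proof. by move=> hj; case: (d_demazure hj). Qed.

Lemma demazureM j p q : (j.+1 < n)%N ->
  d j (omul p q) = omul (d j p) q + omul (osref j p) (d j q).
Proof. by move=> hj; case: (d_demazure hj). Qed.

Lemma demazure0 j : (j.+1 < n)%N -> d j 0 = 0.
Proof. by move=> hj; apply: lin0 (demazure_linear hj). Qed.

Lemma demazure1 j : (j.+1 < n)%N -> d j 1 = 0.
Proof.
move=> hj; have := demazureM 1 1 hj; rewrite omul1l omul1r osref1 omul1l => e.
by apply: (@addIr _ (d j 1)); rewrite add0r -e.
Qed.

Lemma demazure_oxM j v p : (j.+1 < n)%N -> (v < n)%N ->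
  d j (omul (xo v) p) = dval R j v *: p + omul (swap_sign R j v *: xo (swapi j v)) (d j p).
Proof.
move=> hj hv; rewrite demazureM // osref_ox //; congr (_ + _).
case: (d_demazure hj) => _ -> // _.
by rewrite -[p in RHS]omul1l -omulZl scalerBl !scaler_nat.
Qed.

Lemma demazure_ox_far j v p : (j.+1 < n)%N -> (v < n)%N -> v != j -> v != j.+1 ->
  d j (omul (xo v) p) = - omul (xo v) (d j p).
Proof.
move=> hj hv ne1 ne2; rewrite demazure_oxM // /dval /swap_sign /swapi.
by rewrite (negbTE ne1) (negbTE ne2) subrr scale0r add0r scaleN1r omulNl.
Qed.

Lemma demazure_ox_self j p : (j.+1 < n)%N ->
  d j (omul (xo j) p) = p + omul (xo j.+1) (d j p).
Proof.
move=> hj; rewrite demazure_oxM ?(ltnW hj) // /dval /swap_sign /swapi.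
by rewrite eqxx ltn_eqF //= subr0 !scale1r.
Qed.

Lemma demazure_ox_succ j p : (j.+1 < n)%N ->
  d j (omul (xo j.+1) p) = - p + omul (xo j) (d j p).
Proof.
move=> hj; rewrite demazure_oxM // /dval /swap_sign /swapi.
by rewrite eqxx gtn_eqF //= sub0r scaleN1r scale1r.
Qed.

Lemma swapi_lt j v : (j.+1 < n)%N -> (v < n)%N -> (swapi j v < n)%N.
Proof. by rewrite /swapi => hj hv; case: eqP => // _; case: eqP => // _; apply: ltnW. Qed.

Lemma demazure_anticomm i l p : (i.+2 <= l)%N -> (l.+1 < n)%N ->
  d i (d l p) = - d l (d i p).
Proof.
move=> hil hl; have hi : (i.+1 < n)%N by lia.
have far : (i.+2 <= l)%N || (l.+2 <= i)%N by rewrite hil.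
have far' : (l.+2 <= i)%N || (i.+2 <= l)%N by rewrite hil orbT.
(* d_i d_l + d_l d_i kills 1 and moves past each x_u up to a scalar and a relabelling. *)
apply/eqP; rewrite -addr_eq0; apply/eqP; move: p.
apply: (twisted_derivation_eq0 (D := fun p => d i (d l p) + d l (d i p))
   (w := fun u => (swap_sign R l u * swap_sign R i (swapi l u)) *: xo (swapi i (swapi l u)))).
- move=> c x y; rewrite (demazure_linear hl) (demazure_linear hi).
  by rewrite (demazure_linear hi) (demazure_linear hl) scalerDr addrACA.
- by rewrite !demazure1 // !demazure0 // addr0.
move=> u p; have hu := ltn_ord u; rewrite -oxE.
rewrite !demazure_oxM // !(linD (demazure_linear _)) // !(linZ (demazure_linear _)) //.
rewrite !omulZl !(linZ (demazure_linear _)) // !demazure_oxM ?swapi_lt //.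
rewrite !scalerDr !scalerA !omulZl !scalerA (swapiC far).
have := dval_swap_far R far u; have := dval_swap_far R far' u.
rewrite (swap_signC R far u) => /eqP; rewrite addr_eq0 => /eqP ->.
move=> /eqP; rewrite addr_eq0 => /eqP ->.
by rewrite !scaleNr omulDr scalerDr addr_cancel_pairs.
Qed.

Definition sh i N r : OP := oshift i (oh R n N r).

Lemma sh_rec i N r :
  sh i N r.+1 = \sum_(x : 'I_n | (x < N)%N) omul (xo (x + i)) (sh i x.+1 r).
Proof.
rewrite /sh oh_sorted_sum osorted_sumS; last first.
  by move=> y x z le_yx le_zy; apply: leq_trans le_zy le_yx.
rewrite lin_sum; last exact: oshift_linear.
apply: eq_bigr => x ltxN.
rewrite -oxE oshift_oxM // oh_sorted_sum; congr (omul _ (oshift _ _)).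
by apply: eq_osorted_sum => u /=; apply/idP/idP; lia.
Qed.

Lemma sh0 i N : sh i N 0 = 1.
Proof. by rewrite /sh oh_sorted_sum osorted_sum0 oshift1. Qed.

Lemma sh_split i N r : (N < n)%N ->
  sh i N.+1 r.+1 = omul (xo (N + i)) (sh i N.+1 r) + sh i N r.+1.
Proof.
move=> ltNn; rewrite sh_rec (bigD1 (Ordinal ltNn)) //= sh_rec; congr (_ + _).
by apply: eq_bigl => x; rewrite -val_eqE /= ltnS ltn_neqAle andbC.
Qed.

Lemma sh1 i r : (0 < n)%N -> sh i 1 r = opow (xo i) r.
Proof.
move=> n_gt0; elim: r => [|r ih]; first by rewrite sh0.
by rewrite sh_split // sh_rec big_pred0 // addr0 ih add0n.
Qed.

Lemma demazure_sh_eq0 j i N r : (j.+1 < n)%N -> (i + N <= j)%N -> d j (sh i N r) = 0.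
Proof.
move=> hj; elim: r N => [|r ih] N hN; first by rewrite sh0 demazure1.
rewrite sh_rec (lin_sum (demazure_linear hj)) big1 // => x ltxN.
rewrite demazure_ox_far ?ih ?omul0r ?oppr0 //; try lia.
all: apply/eqP; lia.
Qed.

Lemma demazure_sh i M r : ((i + M).+1 < n)%N ->
  d (i + M) (sh i M.+1 r.+1) = sh i M.+2 r.
Proof.
move=> hiM; elim: r => [|r ih]; rewrite sh_split ?(linD (demazure_linear hiM)); try lia.
all: rewrite [(M + i)%N]addnC demazure_ox_self // (@demazure_sh_eq0 _ i M _ hiM) ?leqnn // addr0.
  by rewrite !sh0 demazure1 // omul0r addr0.
have ltM1n : (M.+1 < n)%N by lia.
by rewrite ih (sh_split _ _ ltM1n) addSn addnC addrC.
Qed.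

(* sigma_1 of the elementary symmetric polynomial of degree r in the 0-based
   variables lo, ..., n - 2; thus [se 0 r] is sigma_1(e^(n-1)_r). *)
Definition se lo r : OP := oshift 1 (osorted_sum R n ltn (fun u => lo <= u < n.-1)%N r).

Lemma se_rec lo r :
  se lo r.+1 = \sum_(x : 'I_n | (lo <= x < n.-1)%N) omul (xo (x + 1)) (se x.+1 r).
Proof.
rewrite /se osorted_sumS; last exact: ltn_trans.
rewrite lin_sum; last exact: oshift_linear.
apply: eq_bigr => x /andP[le_lox _]; rewrite -oxE oshift_oxM //; congr (omul _ (oshift _ _)).
by apply: eq_osorted_sum => u /=; apply/idP/idP; lia.
Qed.

Lemma se0 lo : se lo 0 = 1.
Proof. by rewrite /se osorted_sum0 oshift1. Qed.

Lemma se_split lo r : (lo < n.-1)%N -> se lo r.+1 = omul (xo lo.+1) (se lo.+1 r) + se lo.+1 r.+1.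
Proof.
move=> ltlo; have ltlon : (lo < n)%N by lia.
rewrite se_rec (bigD1 (Ordinal ltlon)) /= ?leqnn ?ltlo // addn1 se_rec; congr (_ + _).
by apply: eq_bigl => x; rewrite -val_eqE /=; apply/idP/idP; lia.
Qed.

Lemma demazure_se_low j lo r : (j.+1 < n)%N -> (j < lo)%N -> d j (se lo r) = 0.
Proof.
move=> hj; elim: r lo => [|r ih] lo ltjlo; first by rewrite se0 demazure1.
rewrite se_rec (lin_sum (demazure_linear hj)) big1 // => x /andP[le_lox ltxn].
rewrite demazure_ox_far ?ih ?omul0r ?oppr0 //; try lia.
all: apply/eqP; lia.
Qed.

Lemma demazure_se_head j r : (j.+1 < n)%N -> d j (se j r.+1) = - se j.+1 r.
Proof.
move=> hj; rewrite se_split; last lia.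
rewrite (linD (demazure_linear hj)) demazure_ox_succ //.
by rewrite !(@demazure_se_low j j.+1) // omul0r !addr0.
Qed.

Lemma demazure_se_high j lo r : (j.+1 < n)%N -> (lo < j)%N -> d j (se lo r) = 0.
Proof.
move=> hj; elim: r lo => [|r ih] lo ltloj; first by rewrite se0 demazure1.
move e: (j - lo)%N => k; elim: k lo ltloj e => [|k ihk] lo ltloj e; first lia.
rewrite se_split ?(linD (demazure_linear hj)); last lia.
have [ltlo1j|eqlo1j] : (lo.+1 < j)%N \/ lo.+1 = j by lia.
  rewrite demazure_ox_far ?ih ?ihk ?omul0r ?oppr0 ?addr0 //; try lia.
subst j; rewrite demazure_ox_self // demazure_se_head //.
case: r {ih ihk} => [|r]; first by rewrite !se0 demazure1 // omul0r addr0 subrr.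
rewrite demazure_se_head // omulNr (@se_split lo.+1); last lia.
by rewrite addrAC addrK subrr.
Qed.

Lemma demazure_oshift_osym f : in_OSym n.-1 f ->
  forall j, (0 < j)%N -> (j.+1 < n)%N -> d j (oshift 1 f) = 0.
Proof.
elim=> [|r|p q _ ihp _ ihq|c p _ ihp|p q _ ihp _ ihq] j hj0 hj.
- by rewrite oshift1 demazure1.
- exact: (@demazure_se_high j 0 r).
- by rewrite (linD (oshift_linear 1)) (linD (demazure_linear hj)) ihp // ihq // addr0.
- by rewrite (linZ (oshift_linear 1)) (linZ (demazure_linear hj)) ihp // scaler0.
- by rewrite oshiftM demazureM // ihp // ihq // omul0l omul0r addr0.
Qed.

Section KilledVector.
Variable F : OP.
Hypothesis dF : forall j, (0 < j)%N -> (j.+1 < n)%N -> d j F = 0.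

Lemma demazure_otaus_eq0 i j : (i < j)%N -> (j.+1 < n)%N -> d j (otaus d i F) = 0.
Proof.
elim: i j => [|i ih] j ltij hj; first exact: dF.
rewrite /= -[d j _]opprK -demazure_anticomm ?ih ?demazure0 ?oppr0 //; lia.
Qed.

Lemma demazure_sh_otaus i k r : (i < k)%N -> (k.+1 < n)%N ->
  d k (omul (sh i (k.+1 - i) r.+1) (otaus d i F)) = omul (sh i (k.+2 - i) r) (otaus d i F).
Proof.
move=> ltik hk; rewrite demazureM // demazure_otaus_eq0 // omul0r addr0.
have -> : (k.+1 - i = (k - i).+1)%N by lia.
have -> : (k.+2 - i = (k - i).+2)%N by lia.
by have := @demazure_sh i (k - i) r; rewrite subnKC ?(ltnW ltik) // => ->.
Qed.

Lemma demazure_sh_otaus_top k r : (k.+1 < n)%N ->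
  d k (omul (sh k 1 r.+1) (otaus d k F)) =
  omul (sh k 2 r) (otaus d k F) + omul (sh k.+1 1 r.+1) (otaus d k.+1 F).
Proof.
move=> hk; rewrite demazureM //; have := @demazure_sh k 0 r; rewrite addn0 => -> //.
by rewrite !sh1 ?osref_opow //; lia.
Qed.

Lemma otaus_opow_omul k m : (k < n)%N ->
  otaus d k (omul (opow (xo 0) (m + k)) F) =
  \sum_(i < k.+1) omul (sh i (k.+1 - i) (m + i)) (otaus d i F).
Proof.
elim: k m => [|k ih] m ltkn; first by rewrite big_ord1 /= subn0 !addn0 sh1 //; lia.
rewrite /= -addSnnS ih ?(ltnW ltkn) // (lin_sum (demazure_linear ltkn)).
rewrite !big_ord_recr /= subSnn demazure_sh_otaus_top // addrA; congr (_ + _ + _).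
- by apply: eq_bigr => i _; rewrite addSn demazure_sh_otaus.
- by have -> : (k.+2 - k = 2)%N by lia.
- have -> : (k.+2 - k.+1 = 1)%N by lia.
  by rewrite addnS.
Qed.

End KilledVector.

End Demazure.


Theorem mainTheorem13 (R : fieldType) (hchar : (2%:R : R) != 0)
  (n : nat) (hn : (1 <= n)%N)
  (d : nat -> {mpoly R[n]} -> {mpoly R[n]}) (hd : is_odd_demazure d)
  (f : {mpoly R[n]}) (hf : in_OSym n.-1 f)
  (m k : nat) (hk1 : (1 <= k)%N) (hkn : (k <= n)%N) :
  otaus d k.-1 (omul (opow (@ox R n 0) (m + k - 1)) (oshift 1 f))
  = \sum_(i < k) omul (oshift i (@oh R n (k - i) (m + i))) (otaus d i (oshift 1 f)).
Proof.
case: k hk1 hkn => [//|k] _ ltkn.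
rewrite subn1 addnS /= (otaus_opow_omul hd (demazure_oshift_osym hd hf)) //.
Qed.
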